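(* Let $\alpha>-1$, $M\ge0$, and for $n=0,1,2,\ldots$ let $$y(x)=P_n^{\alpha,\alpha,M,M}(x)=C_0P_n^{(\alpha,\alpha)}(x)-C_1x\frac{d}{dx}P_n^{(\alpha,\alpha)}(x),$$ where $$C_0=1+M\frac{2n}{\alpha+1}\binom{n+2\alpha+1}{n}+4M^2\binom{n+2\alpha+1}{n-1}^2,\qquad C_1=\frac{2M}{2\alpha+1}\binom{n+2\alpha}{n}+\frac{2M^2}{\alpha+1}\binom{n+2\alpha}{n-1}\binom{n+2\alpha+1}{n}.$$ Define $b_0(x)=b_0(n,\alpha,x)=\frac12\left[1-(-1)^n\right]$ and $b_i(x)=\frac{2^{i-1}}{i!}(-x)^i$ for $i=1,2,3,\ldots$. Then $$\sum_{i=0}^{\infty}b_i(x)y^{(i)}(x)=0 .$$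
   Context: $P_n^{(\alpha,\beta)}(x)$ denotes the classical Jacobi polynomial, orthogonal on $[-1,1]$ with respect to $(1-x)^\alpha(1+x)^\beta$ and normalized by $P_n^{(\alpha,\beta)}(1)=\binom{n+\alpha}{n}$. Binomial coefficients $\binom{a}{m}$ are generalized (real $a$), with $\binom{a}{m}=0$ for negative integers $m$. The polynomials $P_n^{\alpha,\alpha,M,M}$ are the generalized (Koornwinder) Jacobi polynomials orthogonal on $[-1,1]$ with respect to the normalized weight $\frac{\Gamma(2\alpha+2)}{2^{2\alpha+1}\Gamma(\alpha+1)^2}(1-x^2)^\alpha+M\delta(x+1)+M\delta(x-1)$. Since $y$ is a polynomial, the sum is finite. *)

From HB Require Import structures.
From mathcomp Require Import all_boot all_order all_algebra.
From mathcomp Require Import reals.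
Set Implicit Arguments. Unset Strict Implicit. Unset Printing Implicit Defensive.
Import Order.TTheory GRing.Theory Num.Theory.
Local Open Scope ring_scope.

Definition gbinom {R : realType} (a : R) (m : int) : R :=
  match m with
  | Posz k => (\prod_(j < k) (a - j%:R)) / (k`!)%:R
  | Negz _ => 0
  end.

Definition jacobiP {R : realType} (n : nat) (a b : R) : {poly R} :=
  \sum_(k < n.+1)
     (gbinom (n%:R + a) (n - k)%:Z * gbinom (n%:R + b) k%:Z) *:
       ((2^-1 *: ('X - 1)) ^+ k * (2^-1 *: ('X + 1)) ^+ (n - k)).

Definition C0 {R : realType} (n : nat) (alpha M : R) : R :=
  1 + M * ((2 * n%:R) / (alpha + 1)) * gbinom (n%:R + 2 * alpha + 1) n%:Z
    + 4 * M ^+ 2 * (gbinom (n%:R + 2 * alpha + 1) (n%:Z - 1)) ^+ 2.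

(* binom(n+2a, n) / (2a+1); at 2a+1 = 0 (where the literal quotient is 0/0
   for n >= 1) we use its continuous extension binom(n+2a, n-1)/n
   (which equals the quotient whenever 2a+1 <> 0 and n >= 1). *)
Definition binom_over {R : realType} (n : nat) (alpha : R) : R :=
  if 2 * alpha + 1 != 0 then gbinom (n%:R + 2 * alpha) n%:Z / (2 * alpha + 1)
  else gbinom (n%:R + 2 * alpha) (n%:Z - 1) / n%:R.

Definition C1 {R : realType} (n : nat) (alpha M : R) : R :=
  2 * M * binom_over n alpha
    + (2 * M ^+ 2 / (alpha + 1)) * gbinom (n%:R + 2 * alpha) (n%:Z - 1)
        * gbinom (n%:R + 2 * alpha + 1) n%:Z.

Definition genJacobiP {R : realType} (n : nat) (alpha M : R) : {poly R} :=
  C0 n alpha M *: jacobiP n alpha alpha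
    - C1 n alpha M *: ('X * (jacobiP n alpha alpha)^`()).

Definition bcoef {R : realType} (n : nat) (i : nat) : {poly R} :=
  if i is 0 then ((1 - (-1) ^+ n) / 2)%:P
  else (2 ^+ i.-1 / (i`!)%:R) *: ((- 'X) ^+ i).

(* With [a = b] the Jacobi polynomial has parity [(-1)^n], hence so does [y],
   since [x d/dx] preserves parity.  By Taylor's formula,
   [y(-x) = y(x + (-2x)) = sum_i y^(i)(x) (-2x)^i / i!], so the terms [i >= 1]
   of the series add up to [(y(-x) - y(x)) / 2 = ((-1)^n - 1) y(x) / 2], which
   is exactly [- b_0 y(x)]. *)
From HB Require Import structures.
From mathcomp Require Import all_boot all_order all_algebra.
From mathcomp Require Import reals.
From mathcomp Require Import ring.
Set Implicit Arguments.
Unset Strict Implicit.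
Unset Printing Implicit Defensive.

Import Order.TTheory GRing.Theory Num.Theory.
Local Open Scope ring_scope.

Lemma comp_poly_XaddE (R : comNzRingType) (p h : {poly R}) (N : nat) :
  (size p <= N)%N -> p \Po ('X + h) = \sum_(i < N) p^`N(i) * h ^+ i.
Proof.
move=> le_p_N.
rewrite /comp_poly (@nderiv_taylor_wide _ N _ _ _ (mulrC _ _)) ?size_map_polyC //.
apply: eq_bigr => i _.
by rewrite nderivn_map -/(comp_poly 'X _) comp_polyXr.
Qed.

Lemma comp_polyN_Xderiv (R : comNzRingType) (p : {poly R}) (c : R) :
  p \Po (- 'X) = c *: p -> ('X * p^`()) \Po (- 'X) = c *: ('X * p^`()).
Proof.
move=> p_par.
have dp_par : p^`() \Po (- 'X) = - (c *: p^`()).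
  have := deriv_comp p (- 'X).
  by rewrite p_par derivZ derivN derivX mulrN1 => ->; rewrite opprK.
by rewrite comp_polyM comp_polyX dp_par mulrN mulNr opprK scalerAr.
Qed.

Section GeneralizedJacobi.
Variable R : realType.

Lemma jacobiP_reflect (n : nat) (a b : R) :
  jacobiP n a b \Po (- 'X) = (-1) ^+ n *: jacobiP n b a.
Proof.
rewrite /jacobiP rmorph_sum scaler_sumr /= (reindex_inj rev_ord_inj) /=.
apply: eq_bigr => k _.
have le_k_n : (k <= n)%N by rewrite -ltnS.
rewrite subSS subKn // linearZ /= rmorphM /= !rmorphXn /= !linearZ /=.
rewrite !rmorphD /= !rmorphN /= comp_polyX !comp_polyC polyC1.
rewrite [X in X *: _ = _]mulrC; congr (_ *: _).
set A := (2^-1 : R) *: ('X + 1); set B := (2^-1 : R) *: ('X - 1).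
have -> : (2^-1 : R) *: (- 'X + 1) = - B by rewrite -scalerN opprB addrC.
have -> : (2^-1 : R) *: (- 'X - 1) = - A by rewrite -scalerN opprD.
rewrite -mul_polyC polyC_exp polyCN polyC1 (exprNn A) (exprNn B).
by rewrite mulrACA -exprD subnK // [A ^+ _ * _]mulrC.
Qed.

Lemma genJacobiP_parity (n : nat) (alpha M : R) :
  genJacobiP n alpha M \Po (- 'X) = (-1) ^+ n *: genJacobiP n alpha M.
Proof.
have P_par := jacobiP_reflect n alpha alpha.
rewrite /genJacobiP linearB !linearZ /= P_par (comp_polyN_Xderiv P_par).
by rewrite scalerDr !scalerN !scalerA [_ * C0 _ _ _]mulrC [_ * C1 _ _ _]mulrC.
Qed.

Lemma bcoefS_deriv (n i : nat) (p : {poly R}) :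
  bcoef n i.+1 * p^`(i.+1) = 2^-1 *: (p^`N(i.+1) * (- ('X *+ 2)) ^+ i.+1).
Proof.
rewrite /bcoef nderivn_def -mulNrn -!scaler_nat exprZn.
rewrite -scalerAl -scalerAr scalerA -scalerAr scalerA [_ * (- 'X) ^+ _]mulrC.
congr (_ *: _).
have fact_neq0 : ((i.+1)`!%:R : R) != 0 by rewrite pnatr_eq0 -lt0n fact_gt0.
by rewrite exprS /=; field; rewrite fact_neq0.
Qed.

Lemma sum_bcoef_deriv (n N : nat) (p : {poly R}) : (size p <= N)%N ->
  \sum_(i < N) bcoef n i * p^`(i) = 2^-1 *: (p \Po (- 'X) - (-1) ^+ n *: p).
Proof.
case: N => [|N] le_p_N.
  move: le_p_N; rewrite leqn0 size_poly_eq0 => /eqP->.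
  by rewrite big_ord0 comp_poly0 scaler0 subr0 scaler0.
have taylor := comp_poly_XaddE (- ('X *+ 2)) le_p_N.
have X_sub_2X : 'X - 'X *+ 2 = - 'X :> {poly R}.
  by rewrite mulr2n opprD addrA subrr add0r.
rewrite X_sub_2X big_ord_recl nderivn0 expr0 mulr1 in taylor.
rewrite big_ord_recl.
under eq_bigr => i _ do rewrite lift0 bcoefS_deriv.
rewrite -scaler_sumr.
have -> : \sum_(i < N) p^`N(i.+1) * (- ('X *+ 2)) ^+ i.+1 = p \Po (- 'X) - p.
  by rewrite taylor addrC addKr; apply: eq_bigr => i _; rewrite lift0.
rewrite /bcoef /= mul_polyC mulrC mulrBr mulr1 scalerBl !scalerBr scalerA.
by rewrite addrC addrA subrK.
Qed.
End GeneralizedJacobi.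

Theorem theorem4 (R : realType) (alpha M : R) (n : nat) :
  -1 < alpha -> 0 <= M ->
  forall N : nat, (size (genJacobiP n alpha M) <= N)%N ->
    \sum_(i < N) bcoef n i * (genJacobiP n alpha M)^`(i) = 0.
Proof.
move=> _ _ N le_y_N.
by rewrite sum_bcoef_deriv // genJacobiP_parity subrr scaler0.
Qed.
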